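(* For every state $\rho\in\mathsf{St}(S)$, $$\mathsf{Erg}(\rho)\le \mathsf A_w(\rho)\,\max_{\sigma\in\mathsf{St}(S):\ \mathrm{Supp}(\sigma)\subseteq\mathrm{Supp}(\rho)}\mathsf{Erg}(\sigma)$$ and $$\mathsf{Erg}(\rho)\le\min\{\mathsf A_r(\rho),1\}\,(E_{i_{\max}}-E_1),$$ where $i_{\max}=\max\{i:\langle i|\rho|i\rangle\neq0\}$.
   Context: $S$ is a $d$-dimensional quantum system with non-degenerate Hamiltonian $H=\sum_i E_i|i\rangle\langle i|$, $E_1<\dots<E_d$. $\mathsf{St}(S)$ is the set of density matrices; $\mathrm{Supp}$ denotes the support (range). Ergotropy: $\mathsf{Erg}(\rho)=\mathrm{Tr}[H\rho]-\min_U\mathrm{Tr}[HU\rho U^\dagger]$ over unitaries $U$. $\mathsf P(S)$ is the set of passive states, i.e. states $\sum_i p_i|i\rangle\langle i|$ with $p_1\ge\dots\ge p_d$. Activity weight: $\mathsf A_w(\rho)=\min\{t\ge0:\ \rho=t\sigma+(1-t)\tau,\ \sigma\in\mathsf{St}(S),\ \tau\in\mathsf P(S)\}$. Robustness of activity: $\mathsf A_r(\rho)=\min\{t\ge0:\ \exists\sigma\in\mathsf{St}(S),\ (\rho+t\sigma)/(1+t)\in\mathsf P(S)\}$. *)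

From mathcomp Require Import all_boot all_algebra.
From mathcomp Require Import classical_sets reals.
From mathcomp Require Import complex.
Set Implicit Arguments. Unset Strict Implicit. Unset Printing Implicit Defensive.
Import GRing.Theory Num.Theory.
Local Open Scope ring_scope.
Local Open Scope classical_set_scope.
Local Open Scope sesquilinear_scope.

Section Defs.
Variables (R : realType) (n : nat).
(* the system has dimension d = n.+1; levels are indexed by 'I_(n.+1) (i.e. |1>,...,|d>
   correspond to ord 0 .. ord n) *)
Local Notation C := R[i].
Local Notation M := 'M[C]_n.+1.

Definition hamiltonian (E : 'I_n.+1 -> R) : M :=
  diag_mx (\row_i ((E i)%:C)%C).

Definition is_state (rho : M) : Prop :=
  rho ^t* = rho /\
  (forall v : 'cV[C]_n.+1, 0 <= (v ^t* *m rho *m v) 0 0) /\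
  \tr rho = 1.

(* Tr[H rho] (real part; it is real for Hermitian rho) *)
Definition energy (E : 'I_n.+1 -> R) (rho : M) : R :=
  complex.Re (\tr (hamiltonian E *m rho)).

Definition ergotropy (E : 'I_n.+1 -> R) (rho : M) : R :=
  energy E rho -
  inf [set energy E (U *m rho *m U ^t*) | U in [set U : M | U \is unitarymx]].

Definition is_passive (tau : M) : Prop :=
  is_state tau /\
  exists p : 'I_n.+1 -> R,
    (forall i j : 'I_n.+1, (i <= j)%N -> p j <= p i) /\
    tau = diag_mx (\row_i ((p i)%:C)%C).

Definition activity_weight (rho : M) : R :=
  inf [set t : R | 0 <= t /\
        exists sigma tau : M, is_state sigma /\ is_passive tau /\
          rho = (t%:C)%C *: sigma + ((1 - t)%:C)%C *: tau].

Definition activity_robustness (rho : M) : R :=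
  inf [set t : R | 0 <= t /\
        exists sigma : M, is_state sigma /\
          is_passive (((1 + t)%:C)%C^-1 *: (rho + (t%:C)%C *: sigma))].

(* Supp(sigma) ⊆ Supp(rho): column space (range) inclusion *)
Definition supp_sub (sigma rho : M) : Prop := (sigma^T <= rho^T)%MS.

Definition max_erg_supp (E : 'I_n.+1 -> R) (rho : M) : R :=
  sup [set ergotropy E sigma | sigma in [set sigma : M | is_state sigma /\ supp_sub sigma rho]].

Definition imax (rho : M) : nat := \max_(i : 'I_n.+1 | rho i i != 0) (i : nat).

End Defs.

From mathcomp Require Import all_boot all_order all_algebra.
From mathcomp Require Import classical_sets reals.
From mathcomp Require Import complex.
From mathcomp Require Import ring lra.
Import Order.TTheory GRing.Theory Num.Theory.
Set Implicit Arguments. Unset Strict Implicit. Unset Printing Implicit Defensive.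
Local Open Scope ring_scope.
Local Open Scope sesquilinear_scope.

(* The ergotropy is governed by the populations <i|rho|i> in the energy
   eigenbasis.  By Abel summation, Tr[H rho] - Tr[H U rho U^dagger] is a
   combination, with the nonnegative gaps E_(j+1) - E_j as coefficients, of the
   gains sum_(i <= j) (<i|U rho U^dagger|i> - <i|rho|i>) of the cumulative
   populations, and only the gaps below i_max contribute.  For a passive tau the
   gains are <= 0, because U acts on the populations by a doubly stochastic
   matrix; so passive states minimise the energy in their unitary orbit, and
   rho = t sigma + (1 - t) tau gives Erg rho <= t Erg sigma, with
   Supp sigma <= Supp rho.  The gains are always at most 1, and at most t when
   (rho + t sigma) / (1 + t) is passive. *)

Section RealField.
Variable R : realFieldType.

Lemma abel_summation (m : nat) (e a : nat -> R) :
  \sum_(i < m.+1) e i * a i =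
  e m * \sum_(i < m.+1) a i - \sum_(j < m) (e j.+1 - e j) * \sum_(i < j.+1) a i.
Proof.
elim: m => [|m IH]; first by rewrite !big_ord1 big_ord0 subr0.
rewrite [LHS]big_ord_recr /= IH.
rewrite [\sum_(j < m.+1) (e j.+1 - e j) * _]big_ord_recr /=.
rewrite [\sum_(i < m.+2) a i]big_ord_recr /=; ring.
Qed.

Lemma abel_summation_le (m : nat) (e a g : nat -> R) :
  (forall j, (j < m)%N -> e j <= e j.+1) ->
  \sum_(i < m.+1) a i = 0 ->
  (forall j, (j < m)%N -> - \sum_(i < j.+1) a i <= g j) ->
  \sum_(i < m.+1) e i * a i <= \sum_(j < m) (e j.+1 - e j) * g j.
Proof.
move=> e_incr a_sum0 a_bound; rewrite abel_summation a_sum0 mulr0 sub0r -sumrN.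
apply: ler_sum => j _; rewrite -mulrN; apply: ler_wpM2l; last exact: a_bound.
by rewrite subr_ge0; apply: e_incr.
Qed.

Lemma sum_telescope_prefix (m k : nat) (e : nat -> R) (D : R) : (k <= m)%N ->
  \sum_(j < m) (e j.+1 - e j) * (if (j < k)%N then D else 0) = D * (e k - e 0%N).
Proof.
move=> le_km; transitivity (\sum_(j < m | (j < k)%N) (e j.+1 - e j) * D).
  rewrite [RHS]big_mkcond /=; apply: eq_bigr => j _.
  by case: ifP => _; rewrite ?mulr0.
rewrite -(big_ord_widen _ (fun j => (e j.+1 - e j) * D) le_km) -mulr_suml mulrC.
by rewrite -(big_mkord xpredT (fun j => e j.+1 - e j)) telescope_sumr.
Qed.

Lemma big_ord_widen_mask (m j : nat) (x : nat -> R) : (j < m)%N ->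
  \sum_(i < j.+1) x i = \sum_(l < m) (if (l <= j)%N then x l else 0).
Proof.
move=> lt_jm; rewrite (big_ord_widen m x lt_jm) big_mkcond /=.
by apply: eq_bigr => l _; rewrite ltnS.
Qed.

Lemma sum_prefix_le (m j : nat) (x : nat -> R) :
  (forall i, (i < m)%N -> 0 <= x i) -> (j < m)%N ->
  \sum_(i < j.+1) x i <= \sum_(i < m) x i.
Proof.
move=> x_ge0 lt_jm; rewrite (big_ord_widen_mask x lt_jm).
by apply: ler_sum => i _; case: ifP => // _; apply: x_ge0.
Qed.

Lemma sum_prefix_eq (m j k : nat) (x : nat -> R) :
  (forall i, (k < i < m)%N -> x i = 0) -> (k <= j)%N -> (j < m)%N ->
  \sum_(i < j.+1) x i = \sum_(i < m) x i.
Proof.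
move=> x_eq0 le_kj lt_jm; rewrite (big_ord_widen_mask x lt_jm).
apply: eq_bigr => i _; case: ifP => // le_ij; rewrite x_eq0 //.
by rewrite ltn_ord andbT (leq_ltn_trans le_kj) // ltnNge le_ij.
Qed.

(* The prefix sum of [b p] is [sum_l w_l p_l] with weights [0 <= w_l <= 1]
   summing to [j + 1]; for a nonincreasing [p] the indicator of [[0, j]] is the
   best such weight. *)
Lemma doubly_stochastic_prefix_le (m : nat) (b : nat -> nat -> R) (p : nat -> R)
    (j : nat) :
  (forall i l, 0 <= b i l) ->
  (forall i, (i < m)%N -> \sum_(l < m) b i l = 1) ->
  (forall l, (l < m)%N -> \sum_(i < m) b i l = 1) ->
  (forall l l', (l <= l')%N -> (l' < m)%N -> p l' <= p l) ->
  (j < m)%N ->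
  \sum_(i < j.+1) \sum_(l < m) b i l * p l <= \sum_(i < j.+1) p i.
Proof.
move=> b_ge0 row_sum col_sum p_decr lt_jm.
pose w l := \sum_(i < j.+1) b i l.
pose c l : R := if (l <= j)%N then 1 else 0.
have -> : \sum_(i < j.+1) \sum_(l < m) b i l * p l = \sum_(l < m) w l * p l.
  by rewrite exchange_big /=; apply: eq_bigr => l _; rewrite mulr_suml.
have -> : \sum_(i < j.+1) p i = \sum_(l < m) c l * p l.
  rewrite (big_ord_widen_mask p lt_jm); apply: eq_bigr => l _.
  by rewrite /c; case: ifP; rewrite ?mul1r ?mul0r.
have sum_wc : \sum_(l < m) w l = \sum_(l < m) c l.
  rewrite /w exchange_big /= (eq_bigr (fun _ => 1)); last first.
    by move=> i _; apply: row_sum; exact: leq_trans (ltn_ord i) lt_jm.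
  exact: (big_ord_widen_mask (fun _ => 1) lt_jm).
have w_le1 l : (l < m)%N -> w l <= 1.
  move=> lt_lm; rewrite -(col_sum l lt_lm) /w (big_ord_widen_mask (fun i => b i l) lt_jm).
  by apply: ler_sum => i _; case: ifP.
rewrite -subr_le0.
(* Subtracting [p j * (sum w - sum c) = 0] makes every term nonpositive. *)
have -> : \sum_(l < m) w l * p l - \sum_(l < m) c l * p l =
          \sum_(l < m) (p l - p j) * (w l - c l).
  have -> : \sum_(l < m) (p l - p j) * (w l - c l) =
      \sum_(l < m) w l * p l - \sum_(l < m) c l * p l -
      p j * (\sum_(l < m) w l - \sum_(l < m) c l).
    by rewrite -!sumrB mulr_sumr -sumrB; apply: eq_bigr => l _; ring.
  by rewrite sum_wc subrr mulr0 subr0.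
apply: sumr_le0 => l _; rewrite /c; case: ifP => le_lj.
  apply: mulr_ge0_le0; first by rewrite subr_ge0; apply: p_decr.
  by rewrite subr_le0; apply: w_le1.
apply: mulr_le0_ge0; last by rewrite subr0 sumr_ge0.
by rewrite subr_le0 p_decr // ltnW // ltnNge le_lj.
Qed.

Lemma quadratic_ge0_lin_eq0 (a Q : R) :
  0 <= Q -> (forall s, 0 <= 2 * s * a + s * s * Q) -> a = 0.
Proof.
move=> Q_ge0 quad_ge0; pose s := - a / (Q + 1).
have Q1_neq0 : Q + 1 != 0 by rewrite gt_eqF //; lra.
have sQ1 : s * (Q + 1) = - a by rewrite /s -mulrA mulVf ?mulr1.
have := quad_ge0 s; rewrite -[a]opprK -sQ1.
have -> : 2 * s * - (s * (Q + 1)) + s * s * Q = - (s * s * (Q + 2)) by ring.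
rewrite oppr_ge0 => quad_le0; have -> : s = 0 by nra.
by rewrite mul0r oppr0.
Qed.

End RealField.

Local Open Scope classical_set_scope.

Lemma le_inf_mul (R : realType) (F : set R) (w c : R) :
  F !=set0 -> 0 <= c -> (forall t, F t -> w <= t * c) -> w <= inf F * c.
Proof.
move=> [t0 Ft0] c_ge0 w_le; have [c0|c_neq0] := eqVneq c 0.
  by have := w_le t0 Ft0; rewrite c0 !mulr0.
have c_gt0 : 0 < c by rewrite lt_def c_neq0.
rewrite -ler_pdivrMr //; apply: lb_le_inf; first by exists t0.
by move=> t Ft; rewrite ler_pdivrMr //; apply: w_le.
Qed.

Section ComplexParts.
Variable R : realType.
Local Notation C := R[i].
Local Notation Re := complex.Re.
Local Notation Im := complex.Im.

Lemma ReD (x y : C) : Re (x + y) = Re x + Re y.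
Proof. by case: x => a b; case: y. Qed.
Lemma ImD (x y : C) : Im (x + y) = Im x + Im y.
Proof. by case: x => a b; case: y. Qed.
Lemma ReB (x y : C) : Re (x - y) = Re x - Re y.
Proof. by case: x => a b; case: y. Qed.
Lemma Re_sum (I : Type) (r : seq I) (P : pred I) (F : I -> C) :
  Re (\sum_(i <- r | P i) F i) = \sum_(i <- r | P i) Re (F i).
Proof. exact: (big_morph _ ReD). Qed.
Lemma Im_sum (I : Type) (r : seq I) (P : pred I) (F : I -> C) :
  Im (\sum_(i <- r | P i) F i) = \sum_(i <- r | P i) Im (F i).
Proof. exact: (big_morph _ ImD). Qed.
Lemma ReM_realL (x : R) (z : C) : Re (x%:C%C * z) = x * Re z.
Proof. by case: z => a b /=; ring. Qed.
Lemma ImM_realL (x : R) (z : C) : Im (x%:C%C * z) = x * Im z.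
Proof. by case: z => a b /=; ring. Qed.
Lemma ReM_Im0 (z w : C) : Im z = 0 -> Re (z * w) = Re z * Re w.
Proof. by case: z => a b /= ->; case: w => c e /=; ring. Qed.
Lemma Re_conj (x : C) : Re (Num.conj x) = Re x.
Proof. by case: x. Qed.
Lemma Re_normsq (z : C) : Re (Num.conj z * z) = Re z ^+ 2 + Im z ^+ 2.
Proof. by case: z => a b /=; ring. Qed.
Lemma Im_normsq (z : C) : Im (Num.conj z * z) = 0.
Proof. by case: z => a b /=; ring. Qed.
Lemma Re_normsq_ge0 (z : C) : 0 <= Re (Num.conj z * z).
Proof. by rewrite Re_normsq addr_ge0 ?sqr_ge0. Qed.
Lemma normsq_eq0 (z : C) : Re (Num.conj z * z) = 0 -> z = 0.
Proof.
case: z => a b /= normsq0.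
have a0 : a = 0 by nra.
have b0 : b = 0 by nra.
by rewrite a0 b0.
Qed.

Lemma conj_real (x : R) : Num.conj (x%:C%C : C) = x%:C%C.
Proof. by apply/eqP; rewrite eq_complex /= oppr0 !eqxx. Qed.

End ComplexParts.

Section States.
Variables (R : realType) (n : nat).
Local Notation C := R[i].
Local Notation Re := complex.Re.
Local Notation Im := complex.Im.
Local Notation d := n.+1.
Local Notation M := 'M[C]_d.
Local Notation V := 'cV[C]_d.
Implicit Types (X Y U rho sigma tau : M) (u v : V).

Definition form X u v : C := (u ^t* *m X *m v) 0 0.

Lemma formE X u v :
  form X u v = \sum_j \sum_i Num.conj (u i 0) * X i j * v j 0.
Proof.
rewrite /form mxE; apply: eq_bigr => j _; rewrite mxE big_distrl /=.
by apply: eq_bigr => i _; rewrite !mxE.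
Qed.

Lemma formDl X u u' v : form X (u + u') v = form X u v + form X u' v.
Proof.
rewrite !formE -big_split; apply: eq_bigr => j _; rewrite -big_split.
by apply: eq_bigr => i _ /=; rewrite mxE rmorphD /= !mulrDl.
Qed.

Lemma formDr X u v v' : form X u (v + v') = form X u v + form X u v'.
Proof.
rewrite !formE -big_split; apply: eq_bigr => j _; rewrite -big_split.
by apply: eq_bigr => i _ /=; rewrite mxE !mulrDr.
Qed.

Lemma formZl X s u v : form X (s *: u) v = Num.conj s * form X u v.
Proof.
rewrite !formE mulr_sumr; apply: eq_bigr => j _; rewrite mulr_sumr.
by apply: eq_bigr => i _ /=; rewrite mxE rmorphM /= !mulrA.
Qed.

Lemma formZr X s u v : form X u (s *: v) = s * form X u v.
Proof.
rewrite !formE mulr_sumr; apply: eq_bigr => j _; rewrite mulr_sumr.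
by apply: eq_bigr => i _ /=; rewrite mxE; ring.
Qed.

Lemma formBl X u u' v : form X (u - u') v = form X u v - form X u' v.
Proof. by rewrite formDl -scaleN1r formZl rmorphN1 mulN1r. Qed.

Lemma formBr X u v v' : form X u (v - v') = form X u v - form X u v'.
Proof. by rewrite formDr -scaleN1r formZr mulN1r. Qed.

Lemma formDm X Y u v : form (X + Y) u v = form X u v + form Y u v.
Proof. by rewrite /form mulmxDr mulmxDl mxE. Qed.

Lemma formZm (a : C) X u v : form (a *: X) u v = a * form X u v.
Proof. by rewrite /form -scalemxAr -scalemxAl mxE. Qed.

Lemma form_delta X (i j : 'I_d) : form X (delta_mx i 0) (delta_mx j 0) = X i j.
Proof.
rewrite formE (bigD1 j) //= [X in _ + X]big1 ?addr0; last first.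
  move=> k /negPf ne_kj; apply: big1 => l _.
  by rewrite [delta_mx j 0 k 0]mxE ne_kj mulr0.
rewrite (bigD1 i) //= [X in _ + X]big1 ?addr0; last first.
  by move=> k /negPf ne_ki; rewrite [delta_mx i 0 k 0]mxE ne_ki rmorph0 !mul0r.
by rewrite !mxE !eqxx /= rmorph1 mul1r mulr1.
Qed.

Lemma form1 v : form 1%:M v v = \sum_i Num.conj (v i 0) * v i 0.
Proof. by rewrite /form mulmx1 mxE; apply: eq_bigr => k _; rewrite !mxE. Qed.

Lemma Re_form1_ge0 v : 0 <= Re (form 1%:M v v).
Proof. by rewrite form1 Re_sum sumr_ge0 // => i _; apply: Re_normsq_ge0. Qed.

Definition herm X := X ^t* = X.

Definition is_psd X := forall v, 0 <= form X v v.

Lemma form_sym X u v : herm X -> form X v u = Num.conj (form X u v).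
Proof.
move=> hermX; rewrite !formE rmorph_sum /= exchange_big /=.
apply: eq_bigr => j _; rewrite rmorph_sum; apply: eq_bigr => i _ /=.
by rewrite -{1}hermX !mxE !rmorphM /= conjCK; ring.
Qed.

Lemma state_herm X : is_state X -> herm X.
Proof. by case. Qed.

Lemma state_psd X : is_state X -> is_psd X.
Proof. by case=> _ []. Qed.

Lemma psd_diag_ge0 X i : is_psd X -> 0 <= Re (X i i).
Proof. by move/(_ (delta_mx i 0)); rewrite form_delta lecE => /andP[]. Qed.

Lemma state_diag_ge0 X i : is_state X -> 0 <= Re (X i i).
Proof. by move/state_psd; apply: psd_diag_ge0. Qed.

Lemma state_trace X : is_state X -> \sum_i Re (X i i) = 1.
Proof. by case=> _ [_ trX1]; rewrite -Re_sum; move: trX1; rewrite /mxtrace => ->. Qed.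

Lemma state_diag_le1 X i : is_state X -> Re (X i i) <= 1.
Proof.
move=> stX; rewrite -(state_trace stX) (bigD1 i) //= lerDl.
by apply: sumr_ge0 => k _; apply: state_diag_ge0.
Qed.

Local Notation cj U X := (U *m X *m U ^t*).

Lemma unitary_trC U : U \is unitarymx -> U ^t* *m U = 1%:M.
Proof. by move=> unitU; rewrite -[U ^t*]mul1mx mulmxKtV. Qed.

Lemma state_cj U X : U \is unitarymx -> is_state X -> is_state (cj U X).
Proof.
move=> unitU [hermX [psdX trX]]; split; last split.
- by rewrite !trmx_mul !map_mxM trmxCK hermX mulmxA.
- by move=> v; have := psdX (U ^t* *m v); rewrite /form trmx_mul map_mxM trmxCK !mulmxA.
- by rewrite mxtrace_mulC mulmxA unitary_trC // mul1mx.
Qed.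

Lemma unitary_row_normsq U i :
  U \is unitarymx -> \sum_k Re (Num.conj (U i k) * U i k) = 1.
Proof.
move=> unitU; transitivity (Re ((U *m U ^t*) i i)).
  by rewrite mxE Re_sum; apply: eq_bigr => k _; rewrite !mxE mulrC.
by rewrite (unitarymxP unitU) mxE eqxx.
Qed.

Lemma unitary_col_normsq U l :
  U \is unitarymx -> \sum_k Re (Num.conj (U k l) * U k l) = 1.
Proof.
move=> unitU; transitivity (Re ((U ^t* *m U) l l)).
  by rewrite mxE Re_sum; apply: eq_bigr => k _; rewrite !mxE.
by rewrite unitary_trC // mxE eqxx.
Qed.

Lemma cjDZ U (a b : C) X Y : cj U (a *: X + b *: Y) = a *: cj U X + b *: cj U Y.
Proof. by rewrite mulmxDr mulmxDl -!scalemxAr -!scalemxAl. Qed.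

Lemma unitarymx1 : (1%:M : M) \is unitarymx.
Proof. by apply/unitarymxP; rewrite trmx1 map_mx1 mulmx1. Qed.

(* Populations are indexed by [nat]; indices [i >= d] fall back to level [0]
   through [inord], so they are only meaningful for [i < d]. *)
Definition pop X (i : nat) : R := Re (X (inord i) (inord i)).

Definition cumpop X (j : nat) : R := \sum_(i < j.+1) pop X i.

Lemma sum_inord (F : 'I_d -> R) : \sum_(i < d) F i = \sum_(i < d) F (inord i).
Proof. by apply: eq_bigr => i _; rewrite inord_val. Qed.

Lemma inord0 : inord 0 = ord0 :> 'I_d.
Proof. by apply: val_inj; rewrite /= inordK. Qed.

Lemma sum_pop X : is_state X -> \sum_(i < d) pop X i = 1.
Proof. by move=> stX; rewrite -(state_trace stX) [RHS]sum_inord. Qed.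

Lemma pop_ge0 X i : is_state X -> 0 <= pop X i.
Proof. exact: state_diag_ge0. Qed.

Lemma cumpop_ge0 X j : is_state X -> 0 <= cumpop X j.
Proof. by move=> stX; apply: sumr_ge0 => i _; apply: pop_ge0. Qed.

Lemma cumpop_le1 X j : is_state X -> (j < d)%N -> cumpop X j <= 1.
Proof.
move=> stX lt_jd; rewrite -(sum_pop stX).
by apply: sum_prefix_le => // i _; apply: pop_ge0.
Qed.

Lemma cumpopDZ (a b : R) X Y j :
  cumpop (a%:C%C *: X + b%:C%C *: Y) j = a * cumpop X j + b * cumpop Y j.
Proof.
rewrite /cumpop !mulr_sumr -big_split; apply: eq_bigr => i _.
by rewrite /pop !mxE ReD !ReM_realL.
Qed.

Lemma imax_lt X : (imax X < d)%N.
Proof. by rewrite /imax ltnS; apply/bigmax_leqP => i _; rewrite -ltnS. Qed.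

Lemma pop_gt_imax X i : (imax X < i < d)%N -> pop X i = 0.
Proof.
case/andP=> lt_mi lt_id; rewrite /pop.
suff -> : X (inord i) (inord i) = 0 by [].
apply/eqP; apply: contraTT lt_mi => neq0; rewrite -leqNgt -{1}(inordK lt_id).
exact: (leq_bigmax_cond (F := fun k : 'I_d => (k : nat))).
Qed.

Lemma energy_pop (E : 'I_d -> R) X :
  energy E X = \sum_(i < d) E (inord i) * pop X i.
Proof.
rewrite /energy /hamiltonian mul_diag_mx /mxtrace Re_sum sum_inord.
by apply: eq_bigr => i _; rewrite !mxE ReM_realL.
Qed.

Lemma energyDZ (E : 'I_d -> R) (a b : R) X Y :
  energy E (a%:C%C *: X + b%:C%C *: Y) = a * energy E X + b * energy E Y.
Proof.
rewrite !energy_pop !mulr_sumr -big_split; apply: eq_bigr => i _ /=.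
by rewrite /pop !mxE ReD !ReM_realL; ring.
Qed.

Lemma passive_cumpop_le tau U j :
  is_passive tau -> U \is unitarymx -> (j < d)%N ->
  cumpop (cj U tau) j <= cumpop tau j.
Proof.
move=> [_ [p [p_decr ->]]] unitU lt_jd.
pose b i l := Re (Num.conj (U (inord i) (inord l)) * U (inord i) (inord l)).
have -> : cumpop (cj U (diag_mx (\row_i (p i)%:C%C))) j =
          \sum_(i < j.+1) \sum_(l < d) b i l * p (inord l).
  apply: eq_bigr => i _; rewrite /pop mxE Re_sum sum_inord.
  apply: eq_bigr => l _; rewrite mul_mx_diag !mxE.
  set u := U (inord i) (inord l).
  have -> : u * (p (inord l))%:C%C * Num.conj u =
            (p (inord l))%:C%C * (Num.conj u * u) by ring.
  by rewrite ReM_realL mulrC.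
have -> : cumpop (diag_mx (\row_i (p i)%:C%C)) j = \sum_(i < j.+1) p (inord i).
  by apply: eq_bigr => i _; rewrite /pop !mxE eqxx mulr1n.
apply: (doubly_stochastic_prefix_le (b := b) (p := fun l => p (inord l))) => //.
- by move=> i l; apply: Re_normsq_ge0.
- move=> i lt_id; rewrite -(unitary_row_normsq (inord i) unitU) [RHS]sum_inord.
  by apply: eq_bigr.
- move=> l lt_ld; rewrite -(unitary_col_normsq (inord l) unitU) [RHS]sum_inord.
  by apply: eq_bigr.
- by move=> l l' le_ll' lt_l'd; apply: p_decr; rewrite !inordK // (leq_ltn_trans le_ll').
Qed.

Section Energy.
Variable E : 'I_d -> R.
Hypothesis E_nondecr : forall i j : 'I_d, (i <= j)%N -> E i <= E j.

Lemma E_step j : (j < n)%N -> E (inord j) <= E (inord j.+1).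
Proof. by move=> lt_jn; apply: E_nondecr; rewrite !inordK // ltnW. Qed.

Lemma energy_ge_ground X : is_state X -> E ord0 <= energy E X.
Proof.
move=> stX; rewrite energy_pop -[E ord0]mulr1 -(sum_pop stX) mulr_sumr.
by apply: ler_sum => i _; apply: ler_wpM2r; [apply: pop_ge0 | apply: E_nondecr].
Qed.

Lemma energy_le_top X : is_state X -> energy E X <= E ord_max.
Proof.
move=> stX; rewrite energy_pop -[E ord_max]mulr1 -(sum_pop stX) mulr_sumr.
apply: ler_sum => i _; apply: ler_wpM2r; first exact: pop_ge0.
by apply: E_nondecr; rewrite -ltnS.
Qed.

(* Abel summation: the energy difference is a combination of the level gaps
   weighted by the gains of cumulative populations; levels above [k] are empty
   in [rho], so from [k] on these gains are nonpositive. *)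
Lemma energy_drop_le rho tau (D : R) (k : nat) :
  is_state rho -> is_state tau -> (k < d)%N ->
  (forall i, (k < i < d)%N -> pop rho i = 0) ->
  (forall j, (j < k)%N -> cumpop tau j - cumpop rho j <= D) ->
  energy E rho - energy E tau <= D * (E (inord k) - E ord0).
Proof.
move=> st_rho st_tau lt_kd pop_eq0 gain_le.
pose a i := pop rho i - pop tau i.
have -> : energy E rho - energy E tau = \sum_(i < d) E (inord i) * a i.
  by rewrite !energy_pop -sumrB; apply: eq_bigr => i _; rewrite mulrBr.
have sum_a : \sum_(i < d) a i = 0 by rewrite sumrB !sum_pop // subrr.
have prefix_a j : (j < n)%N -> - \sum_(i < j.+1) a i <= if (j < k)%N then D else 0.
  move=> lt_jn; rewrite sumrB opprB; case: ifPn => [lt_jk|]; first exact: gain_le.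
  rewrite -leqNgt => le_kj.
  rewrite (sum_prefix_eq pop_eq0 le_kj (leqW lt_jn)) sum_pop // subr_le0.
  exact: cumpop_le1 (leqW lt_jn).
apply: le_trans (abel_summation_le E_step sum_a prefix_a) _.
by rewrite (@sum_telescope_prefix _ n k (fun j => E (inord j)) D lt_kd) inord0.
Qed.

Lemma energy_le_of_cumpop rho tau :
  is_state rho -> is_state tau ->
  (forall j, (j < n)%N -> cumpop tau j <= cumpop rho j) ->
  energy E rho <= energy E tau.
Proof.
move=> st_rho st_tau cumpop_le; rewrite -subr_le0.
have := @energy_drop_le rho tau 0 n st_rho st_tau (ltnSn n).
rewrite mul0r; apply=> [i /andP[lt_ni lt_id]|j /cumpop_le]; last by rewrite subr_le0.
by move: (leq_ltn_trans lt_ni lt_id); rewrite ltnn.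
Qed.

Lemma passive_energy_le tau U :
  is_passive tau -> U \is unitarymx -> energy E tau <= energy E (cj U tau).
Proof.
move=> pas_tau unitU; have st_tau := pas_tau.1.
apply: energy_le_of_cumpop => //; first exact: state_cj.
by move=> j lt_jn; apply: passive_cumpop_le => //; apply: leqW.
Qed.

Lemma ergotropy_le X a :
  (forall U, U \is unitarymx -> energy E X - a <= energy E (cj U X)) ->
  ergotropy E X <= a.
Proof.
move=> drop_le; rewrite /ergotropy lerBlDr -lerBlDl; apply: lb_le_inf.
  by exists (energy E X), 1%:M; [exact: unitarymx1 | rewrite mul1mx trmx1 map_mx1 mulmx1].
by move=> _ [U unitU <-]; apply: drop_le.
Qed.

Lemma energy_sub_ergotropy_le X U : is_state X -> U \is unitarymx ->
  energy E X - ergotropy E X <= energy E (cj U X).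
Proof.
move=> stX unitU; rewrite /ergotropy opprB addrC subrK.
apply: ge_inf; last by exists U.
by exists (E ord0) => _ [V unitV <-]; apply/energy_ge_ground/state_cj.
Qed.

Lemma ergotropy_ge0 X : is_state X -> 0 <= ergotropy E X.
Proof.
move=> stX; have := energy_sub_ergotropy_le stX unitarymx1.
by rewrite mul1mx trmx1 map_mx1 mulmx1 lerBlDr lerDl.
Qed.

Lemma ergotropy_le_gap X : is_state X -> ergotropy E X <= E ord_max - E ord0.
Proof.
move=> stX; apply: ergotropy_le => U unitU.
have := energy_le_top stX; have := energy_ge_ground (state_cj unitU stX); lra.
Qed.

Lemma ergotropy_le_cumpop_gain rho (D : R) :
  is_state rho ->
  (forall U j, U \is unitarymx -> (j < d)%N ->
    cumpop (cj U rho) j - cumpop rho j <= D) ->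
  ergotropy E rho <= D * (E (inord (imax rho)) - E ord0).
Proof.
move=> st_rho gain_le; apply: ergotropy_le => U unitU.
suff : energy E rho - energy E (cj U rho) <= D * (E (inord (imax rho)) - E ord0).
  by lra.
apply: energy_drop_le => //; first exact: state_cj.
- exact: imax_lt.
- exact: pop_gt_imax.
- by move=> j lt_j; apply: gain_le => //; apply: ltn_trans lt_j (imax_lt rho).
Qed.

(* Passive states minimise energy in their orbit, so the ergotropy of the mixture
   can only come from its [sigma] part. *)
Lemma ergotropy_mix_passive_le rho sigma tau (t : R) :
  is_state sigma -> is_passive tau -> 0 <= t -> t <= 1 ->
  rho = t%:C%C *: sigma + (1 - t)%:C%C *: tau ->
  ergotropy E rho <= t * ergotropy E sigma.
Proof.
move=> st_sigma pas_tau t_ge0 t_le1 ->; apply: ergotropy_le => U unitU.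
rewrite cjDZ !energyDZ.
have := ler_wpM2l t_ge0 (energy_sub_ergotropy_le st_sigma unitU).
have := passive_energy_le pas_tau unitU.
nra.
Qed.

End Energy.

Lemma cumpop_gain_le1 rho U j : is_state rho -> U \is unitarymx -> (j < d)%N ->
  cumpop (cj U rho) j - cumpop rho j <= 1.
Proof.
move=> st_rho unitU lt_jd; have := cumpop_le1 (state_cj unitU st_rho) lt_jd.
have := cumpop_ge0 j st_rho; lra.
Qed.

Lemma cumpop_gain_le_robust rho sigma tau (t : R) U j :
  is_state sigma -> is_passive tau -> 0 <= t ->
  rho = (1 + t)%:C%C *: tau + (- t)%:C%C *: sigma ->
  U \is unitarymx -> (j < d)%N ->
  cumpop (cj U rho) j - cumpop rho j <= t.
Proof.
move=> st_sigma pas_tau t_ge0 -> unitU lt_jd; rewrite cjDZ !cumpopDZ.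
have := passive_cumpop_le pas_tau unitU lt_jd.
have := cumpop_le1 st_sigma lt_jd; have := cumpop_ge0 j (state_cj unitU st_sigma).
nra.
Qed.

(* A vanishing quadratic form [u* X u] of a psd [X] forces [X u = 0]: the
   form at [u + s X u] is [2 s |X u|^2 + O(s^2)], which cannot stay
   nonnegative for small negative [s] unless [|X u|^2 = 0]. *)
Lemma psd_form_eq0 X u : is_psd X -> herm X -> form X u u = 0 -> X *m u = 0.
Proof.
move=> psdX hermX form0; set y := X *m u.
pose N := \sum_i Num.conj (y i 0) * y i 0.
have form_uy : form X u y = N.
  rewrite /form (_ : u ^t* *m X = y ^t*); last by rewrite /y trmx_mul map_mxM hermX.
  by rewrite mxE; apply: eq_bigr => k _; rewrite !mxE.
have Q_ge0 : 0 <= Re (form X y y) by move: (psdX y); rewrite lecE => /andP[].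
have quad_ge0 s : 0 <= 2 * s * Re N + s * s * Re (form X y y).
  move: (psdX (u + s%:C%C *: y)); rewrite lecE => /andP[_].
  rewrite formDl !formDr !formZl !formZr conj_real form0 (form_sym u y hermX) form_uy.
  by rewrite !ReD !ReM_realL Re_conj /=; lra.
have ReN0 := quadratic_ge0_lin_eq0 Q_ge0 quad_ge0.
apply/matrixP => i k; rewrite ord1 [RHS]mxE; apply: normsq_eq0.
have sum0 : \sum_j Re (Num.conj (y j 0) * y j 0) = 0 by rewrite -Re_sum.
exact: (psumr_eq0P (fun j _ => Re_normsq_ge0 (y j 0)) sum0 isT).
Qed.

Lemma supp_sub_mix rho sigma tau (t : R) :
  is_state rho -> is_state sigma -> is_state tau -> 0 < t -> t <= 1 ->
  rho = t%:C%C *: sigma + (1 - t)%:C%C *: tau -> supp_sub sigma rho.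
Proof.
move=> st_rho st_sigma st_tau t_gt0 t_le1 rho_mix.
have ker_sub (k : V) : rho^T *m k = 0 -> sigma^T *m k = 0.
  move=> rhoTk0; set u := k ^ Num.conj.
  have rho_u : rho *m u = 0.
    by move: (congr1 (map_mx Num.conj) rhoTk0); rewrite map_mxM map_mx0 (state_herm st_rho).
  have : form rho u u = 0 by rewrite /form -mulmxA rho_u mulmx0 mxE.
  rewrite rho_mix formDm !formZm => /eqP; rewrite paddr_eq0; first last.
  - by apply: mulr_ge0; [rewrite ler0c subr_ge0 | exact: state_psd].
  - by apply: mulr_ge0; [rewrite ler0c ltW | exact: state_psd].
  have t_neq0 : (t%:C%C : C) != 0 by rewrite eq_complex /= gt_eqF.
  case/andP; rewrite mulf_eq0 (negPf t_neq0) => /eqP form_sigma0 _.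
  have sigma_u := psd_form_eq0 (state_psd st_sigma) (state_herm st_sigma) form_sigma0.
  apply/eqP; rewrite -(map_mx_eq0 Num.conj) map_mxM (state_herm st_sigma).
  by rewrite -/u sigma_u.
rewrite /supp_sub submxE; apply/eqP/matrixP => i j.
have col0 : sigma^T *m col j (cokermx rho^T) = 0.
  by apply: ker_sub; rewrite colE mulmxA mulmx_coker mul0mx.
transitivity ((sigma^T *m col j (cokermx rho^T)) i 0); last by rewrite col0 !mxE.
by rewrite !mxE; apply: eq_bigr => l _; rewrite !mxE.
Qed.

(* Positivity on [v_i e_i - v_j e_j], with diagonal entries at most [1]. *)
Lemma state_cross_le X v (i j : 'I_d) : is_state X ->
  Re (Num.conj (v i 0) * X i j * v j 0) + Re (Num.conj (v j 0) * X j i * v i 0) <=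
  Re (Num.conj (v i 0) * v i 0) + Re (Num.conj (v j 0) * v j 0).
Proof.
move=> stX; set a := v i 0; set b := v j 0.
have := state_psd stX (a *: delta_mx i 0 - b *: delta_mx j 0).
rewrite formBl !formBr !formZl !formZr !form_delta lecE => /andP[_].
have -> : Num.conj a * (a * X i i) - Num.conj a * (b * X i j) -
          (Num.conj b * (a * X j i) - Num.conj b * (b * X j j)) =
          Num.conj a * a * X i i + Num.conj b * b * X j j -
          (Num.conj a * X i j * b + Num.conj b * X j i * a) by ring.
rewrite ReB !ReD !(ReM_Im0 _ (Im_normsq _)) /=.
have := ler_wpM2l (Re_normsq_ge0 a) (state_diag_le1 i stX).
have := ler_wpM2l (Re_normsq_ge0 b) (state_diag_le1 j stX).
lra.
Qed.

Lemma state_form_le_dim X v : is_state X ->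
  Re (form X v v) <= d%:R * Re (form 1%:M v v).
Proof.
move=> stX; pose x i j := Re (Num.conj (v i 0) * X i j * v j 0).
pose y i := Re (Num.conj (v i 0) * v i 0).
have -> : Re (form X v v) = \sum_j \sum_i x i j.
  by rewrite formE Re_sum; apply: eq_bigr => j _; rewrite Re_sum.
have -> : Re (form 1%:M v v) = \sum_i y i by rewrite form1 Re_sum.
have : \sum_j \sum_i (x i j + x j i) <= \sum_j \sum_i (y i + y j).
  by apply: ler_sum => j _; apply: ler_sum => i _; apply: state_cross_le.
have -> : \sum_j \sum_i (x i j + x j i) = 2 * \sum_j \sum_i x i j.
  under eq_bigr do rewrite big_split /=.
  by rewrite big_split /= [\sum_j \sum_i x j i]exchange_big /=; ring.
have -> : \sum_j \sum_i (y i + y j) = 2 * (d%:R * \sum_i y i).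
  under eq_bigr do rewrite big_split /= sumr_const card_ord -mulr_natl.
  by rewrite big_split /= sumr_const card_ord -mulr_sumr -mulr_natl; ring.
lra.
Qed.

Lemma scalar_diag (a : R) : (a%:C%C : C) *: (1%:M : M) = diag_mx (\row_(i < d) a%:C%C).
Proof. by apply/matrixP => i j; rewrite !mxE; case: eqP; rewrite ?mulr1 ?mulr0. Qed.

Lemma passive_uniform : is_passive ((d%:R^-1)%:C%C *: (1%:M : M)).
Proof.
have d_gt0 : 0 < d%:R :> R by rewrite ltr0n.
split; last by exists (fun _ => d%:R^-1); split=> //; rewrite scalar_diag.
split; last split.
- by rewrite scalemx1 tr_scalar_mx map_scalar_mx /= conj_real.
- move=> v; rewrite -/(form _ v v) formZm form1.
  apply: mulr_ge0; first by rewrite ler0c invr_ge0 ltW.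
  by apply: sumr_ge0 => i _; rewrite mulrC mul_conjC_ge0.
- rewrite mxtraceZ mxtrace1 -(rmorph_nat (real_complex R)) -rmorphM.
  by rewrite mulVf ?gt_eqF.
Qed.

Lemma state_complement rho (t s : R) :
  is_state rho -> 0 < t -> d%:R <= s -> s * d%:R = 1 + t ->
  is_state ((t^-1 * s)%:C%C *: 1%:M + (- t^-1)%:C%C *: rho).
Proof.
move=> st_rho t_gt0 d_le_s sd.
have rho_herm i j : Num.conj (rho j i) = rho i j.
  by have := congr1 (fun A : M => A i j) (state_herm st_rho); rewrite !mxE.
split; last split.
- apply/matrixP => i j; rewrite !mxE rmorphD !rmorphM /= !conj_real rmorph_nat.
  by rewrite rho_herm eq_sym.
- move=> v; rewrite -/(form _ v v) formDm !formZm lecE.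
  have Im_form1 : Im (form 1%:M v v) = 0.
    by rewrite form1 Im_sum big1 // => i _; rewrite Im_normsq.
  have := state_psd st_rho v; rewrite lecE => /andP[/eqP /= Im_form_rho _].
  rewrite ImD !ImM_realL Im_form1 Im_form_rho !mulr0 addr0 eqxx /= ReD !ReM_realL.
  have form_le : Re (form rho v v) <= s * Re (form 1%:M v v).
    by apply: le_trans (state_form_le_dim v st_rho) (ler_wpM2r (Re_form1_ge0 v) d_le_s).
  by rewrite mulNr -mulrA -mulrBr mulr_ge0 ?invr_ge0 ?subr_ge0 ?(ltW t_gt0).
- rewrite mxtraceD !mxtraceZ mxtrace1.
  have -> : \tr rho = 1 by case: st_rho => _ [].
  rewrite -(rmorph_nat (real_complex R)) -rmorphM mulr1 -rmorphD -mulrA sd.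
  by rewrite mulrDr mulr1 addrAC subrr add0r mulVf ?gt_eqF.
Qed.

(* [rho + t sigma] is a multiple of the identity, hence proportional to the
   uniform (passive) state. *)
Lemma robustness_feasible rho : is_state rho ->
  exists t : R, 0 <= t /\ exists sigma, is_state sigma /\
    is_passive (((1 + t)%:C%C)^-1 *: (rho + t%:C%C *: sigma)).
Proof.
move=> st_rho; pose c : R := d%:R; pose t := c * c; pose s := (1 + t) / c.
have c_gt0 : 0 < c by rewrite ltr0n.
have t_gt0 : 0 < t by rewrite mulr_gt0.
have sc : s * c = 1 + t by rewrite /s mulfVK ?gt_eqF.
have c_le_s : c <= s by rewrite ler_pdivlMr // /t; lra.
pose sigma : M := (t^-1 * s)%:C%C *: 1%:M + (- t^-1)%:C%C *: rho.
exists t; split; first exact: ltW.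
exists sigma; split; first exact: (state_complement st_rho t_gt0 c_le_s sc).
have -> : rho + t%:C%C *: sigma = s%:C%C *: 1%:M.
  rewrite /sigma scalerDr !scalerA -!rmorphM mulrA mulfV ?gt_eqF // mul1r.
  by rewrite mulrN mulfV ?gt_eqF // rmorphN rmorph1 scaleN1r (addrC rho) subrK.
rewrite scalerA -fmorphV -rmorphM /s mulKf ?gt_eqF ?addr_gt0 //.
exact: passive_uniform.
Qed.

End States.

Section Bounds.
Variables (R : realType) (n : nat) (E : 'I_n.+1 -> R).
Hypothesis E_nondecr : forall i j : 'I_n.+1, (i <= j)%N -> E i <= E j.
Variable rho : 'M[R[i]]_n.+1.
Hypothesis st_rho : is_state rho.

Lemma ergotropy_le_weight_max :
  ergotropy E rho <= activity_weight rho * max_erg_supp E rho.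
Proof.
set Mx := max_erg_supp E rho.
have erg_le_max sigma : is_state sigma -> supp_sub sigma rho -> ergotropy E sigma <= Mx.
  move=> st_sigma supp_sigma; apply: ub_le_sup; last by exists sigma.
  by exists (E ord_max - E ord0) => _ [tau [st_tau _] <-]; apply: ergotropy_le_gap.
have erg_rho_le : ergotropy E rho <= Mx by apply: erg_le_max => //; apply: submx_refl.
have Mx_ge0 : 0 <= Mx := le_trans (ergotropy_ge0 E_nondecr st_rho) erg_rho_le.
apply: le_inf_mul => //.
  exists 1; split=> //; exists rho, ((n.+1%:R^-1)%:C%C *: 1%:M).
  split=> //; split; first exact: passive_uniform.
  by rewrite rmorph1 scale1r subrr rmorph0 scale0r addr0.
move=> t [t_ge0 [sigma [tau [st_sigma [pas_tau rho_mix]]]]].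
have [t_le1|/ltW t_ge1] := leP t 1; last exact: le_trans erg_rho_le (ler_peMl _ _).
apply: le_trans (ergotropy_mix_passive_le E_nondecr st_sigma pas_tau t_ge0 t_le1 rho_mix) _.
have [->|t_neq0] := eqVneq t 0; first by rewrite !mul0r.
apply/ler_wpM2l/erg_le_max => //.
by apply: supp_sub_mix st_rho st_sigma pas_tau.1 _ t_le1 rho_mix; rewrite lt_def t_neq0.
Qed.

Lemma ergotropy_le_robustness_gap :
  ergotropy E rho <=
    Num.min (activity_robustness rho) 1 * (E (inord (imax rho)) - E ord0).
Proof.
set D := E (inord (imax rho)) - E ord0.
have D_ge0 : 0 <= D by rewrite subr_ge0 E_nondecr.
case: (leP 1 (activity_robustness rho)) => [_|_].
  rewrite mul1r; apply: le_trans (ergotropy_le_cumpop_gain E_nondecr st_rho _) _.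
    by move=> U j unitU lt_jd; apply: cumpop_gain_le1.
  by rewrite mul1r.
apply: le_inf_mul => //.
  have [t [t_ge0 [sigma feasible]]] := robustness_feasible st_rho.
  by exists t; split=> //; exists sigma.
move=> t [t_ge0 [sigma [st_sigma pas_tau]]].
apply: ergotropy_le_cumpop_gain => // U j unitU lt_jd.
apply: (cumpop_gain_le_robust st_sigma pas_tau t_ge0 _ unitU lt_jd).
have t1_neq0 : ((1 + t)%:C%C : R[i]) != 0 by rewrite eq_complex /= gt_eqF //; lra.
by rewrite scalerA mulfV // scale1r rmorphN scaleNr addrK.
Qed.

End Bounds.

Theorem mainTheorem11 (R : realType) (n : nat) (E : 'I_n.+1 -> R)
  (HE : forall i j : 'I_n.+1, (i < j)%N -> E i < E j)
  (rho : 'M[R[i]]_n.+1) (Hrho : is_state rho) :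
  ergotropy E rho <= activity_weight rho * max_erg_supp E rho /\
  ergotropy E rho <=
    Num.min (activity_robustness rho) 1 * (E (inord (imax rho)) - E ord0).
Proof.
have E_nondecr (i j : 'I_n.+1) : (i <= j)%N -> E i <= E j.
  by rewrite leq_eqVlt => /orP[/eqP/val_inj-> // | /HE/ltW].
split; [exact: ergotropy_le_weight_max | exact: ergotropy_le_robustness_gap].
Qed.
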